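(* Let $A\in\mathbb R^{n\times n}$ be Hurwitz and let $L\in\mathbb R^{n\times m}$ have full column rank. Then there exist right-invertible matrices $P$ and $\overline P$ (with $n$ columns) and right inverses $P^\dagger$, $\overline P^\dagger$ (i.e. $PP^\dagger=I$, $\overline P\,\overline P^\dagger=I$) such that (C1) $P^\dagger P+\overline P^\dagger\overline P=I_n$; (C2) $PAP^\dagger$ and $\overline PA\overline P^\dagger$ are Hurwitz; (C3) $PL=0$ and $\overline PL$ is (square and) nonsingular.
   Context: A square real matrix is Hurwitz (stable) if all its eigenvalues have negative real part. *)

(* Real matrices are modelled as matrices over an arbitrary
   numClosedFieldType C (e.g. the complex numbers) whose entries are all real;
   eigenvalues are then the (complex) eigenvalues in C. *)
From HB Require Import structures.
From mathcomp Require Import all_boot all_order all_algebra.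
Set Implicit Arguments. Unset Strict Implicit. Unset Printing Implicit Defensive.
Import Order.TTheory GRing.Theory Num.Theory.
Local Open Scope ring_scope.

Definition real_mx (C : numClosedFieldType) (p q : nat) (M : 'M[C]_(p, q)) : Prop :=
  M \is a mxOver Num.real.

Definition hurwitz (C : numClosedFieldType) (k : nat) (M : 'M[C]_k) : Prop :=
  forall l : C, eigenvalue M l -> 'Re l < 0.

From HB Require Import structures.
From mathcomp Require Import all_boot all_order all_algebra.
From mathcomp Require Import sesquilinear spectral.
From mathcomp Require Import ring.
Set Implicit Arguments. Unset Strict Implicit. Unset Printing Implicit Defensive.
Import Order.TTheory GRing.Theory Num.Theory Num.Def.
Local Open Scope ring_scope.
Local Open Scope sesquilinear_scope.

(* Real matrices are matrices over a numClosedFieldType [C] fixed by complex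
   conjugation; vectors are rows, [M^t*] is the conjugate transpose.  The proof
   follows Lyapunov's method in three steps.
   1. Lyapunov matrices.  [Y] is a Lyapunov matrix for [A] when it is Hermitian
      positive definite and [A Y + Y A^*] is negative definite.  Its existence
      forces [A] to be Hurwitz (lyapunov_hurwitz); conversely every Hurwitz
      matrix has one (hurwitz_lyapunov): Schur-triangularize [A] and conjugate
      the triangular factor by [diag (e^i)] for a small [e], which makes its
      diagonal dominant.  Symmetrizing with the conjugate makes [Y] real.
   2. Compression.  For a row-free [P], the right inverse
      [compress Y P = Y P^* (P Y P^* )^-1] turns a Lyapunov matrix [Y] for [A]
      into the Lyapunov matrix [P Y P^*] for [P A (compress Y P)], which is
      therefore Hurwitz (compress_lyapunov).
   3. Construction.  With [Pbar = L^* Y^-1], whose compressing right inverse is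
      [L (Pbar L)^-1], let [Pker] be a row basis, made of some rows, of the
      projection [1 - Pbar_rinv Pbar] onto the vectors killing [L].  Step 2
      gives (C2), (C3) holds by construction, (C1) follows from the crosswise
      annihilations, and all four matrices are real when [Y] and [L] are. *)

Section LyapunovMatrices.
Variable C : numClosedFieldType.

Definition qf n (u : 'rV[C]_n) (M : 'M[C]_n) : C := (u *m M *m u^t*) 0 0.

Definition posdef n (Y : 'M[C]_n) : Prop := forall u : 'rV_n, u != 0 -> 0 < qf u Y.

Definition lyapunov_mx n (Y A : 'M[C]_n) : Prop :=
  [/\ Y^t* = Y, posdef Y & forall u : 'rV_n, u != 0 -> 'Re (qf u (A *m Y)) < 0].

Lemma trmxC_mul m n p (M : 'M[C]_(m, n)) (N : 'M[C]_(n, p)) :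
  (M *m N)^t* = N^t* *m M^t*.
Proof. by rewrite trmx_mul map_mxM. Qed.

Lemma qf_mulmx m n (u : 'rV[C]_m) (V : 'M[C]_(m, n)) (M : 'M[C]_n) :
  qf (u *m V) M = qf u (V *m M *m V^t*).
Proof. by rewrite /qf trmxC_mul !mulmxA. Qed.

Lemma qfD n (u : 'rV[C]_n) (M N : 'M[C]_n) : qf u (M + N) = qf u M + qf u N.
Proof. by rewrite /qf mulmxDr mulmxDl mxE. Qed.

Lemma qf_conj n (u : 'rV[C]_n) (M : 'M[C]_n) :
  qf u (map_mx conjC M) = (qf (map_mx conjC u) M)^*.
Proof.
have entry_conj (X : 'M[C]_1) : (X 0 0)^* = (X ^ conjC) 0 0 by rewrite mxE.
rewrite /qf entry_conj !map_mxM map_mxCK; congr ((_ *m _ *m _) 0 0).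
by apply/matrixP => i j; rewrite !mxE conjCK.
Qed.

Lemma qf_diag n (u : 'rV[C]_n) (d : 'rV[C]_n) :
  qf u (diag_mx d) = \sum_i d 0 i * `|u 0 i| ^+ 2.
Proof.
rewrite /qf mul_mx_diag mxE; apply: eq_bigr => i _.
by rewrite !mxE normCK mulrAC mulrC.
Qed.

Lemma qfE n (u : 'rV[C]_n) (M : 'M[C]_n) :
  qf u M = \sum_i \sum_j u 0 i * M i j * (u 0 j)^*.
Proof.
rewrite /qf mxE [RHS]exchange_big; apply: eq_bigr => j _.
by rewrite !mxE big_distrl; apply: eq_bigr => i _; rewrite ?mxE.
Qed.

Lemma posdef_unit n (Y : 'M[C]_n) : posdef Y -> Y \in unitmx.
Proof.
move=> Ypos; rewrite -row_free_unit -kermx_eq0; apply/eqP/row_matrixP => i.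
rewrite row0; apply/eqP; apply: contraT => /Ypos.
by rewrite /qf -row_mul mulmx_ker row0 mul0mx mxE ltxx.
Qed.

Lemma gram_posdef k n (Y : 'M[C]_n) (P : 'M[C]_(k, n)) :
  posdef Y -> row_free P -> posdef (P *m Y *m P^t*).
Proof.
by move=> Ypos Pfree u u0; rewrite -qf_mulmx Ypos // mulmx_free_eq0.
Qed.

(* The existence of a Lyapunov matrix forces every eigenvalue into the open
   left half-plane: for [v A = l v], [v A Y v^* = l (v Y v^* )]. *)
Lemma lyapunov_hurwitz n (Y A : 'M[C]_n) : lyapunov_mx Y A -> hurwitz A.
Proof.
move=> [_ Ypos Aneg] l /eigenvalueP [v vA v0].
have qfA : qf v (A *m Y) = l * qf v Y by rewrite /qf mulmxA vA -!scalemxAl mxE.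
have qpos := Ypos v v0.
by have := Aneg v v0; rewrite qfA ReMr ?gtr0_real // pmulr_llt0.
Qed.

Lemma lyapunov_similar n (V Y A B : 'M[C]_n) :
  V \in unitmx -> A *m V = V *m B -> lyapunov_mx Y B ->
  lyapunov_mx (V *m Y *m V^t*) A.
Proof.
move=> Vu AV [Yh Ypos Bneg].
have uV0 (u : 'rV_n) : u != 0 -> u *m V != 0 by rewrite mulmx_free_eq0 ?row_free_unit.
split=> [|u u0|u u0].
- by rewrite !trmxC_mul trmxCK Yh mulmxA.
- by rewrite -qf_mulmx Ypos ?uV0.
- by rewrite !mulmxA AV -(mulmxA V B Y) -qf_mulmx Bneg ?uV0.
Qed.

Definition compress k n (Y : 'M[C]_n) (P : 'M[C]_(k, n)) : 'M[C]_(n, k) :=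
  Y *m P^t* *m invmx (P *m Y *m P^t*).

Lemma compress_rinv k n (Y : 'M[C]_n) (P : 'M[C]_(k, n)) :
  posdef Y -> row_free P -> P *m compress Y P = 1%:M.
Proof.
move=> Ypos Pfree; rewrite /compress !mulmxA mulmxV //.
exact/posdef_unit/gram_posdef.
Qed.

(* Key step: compressing [A] with the [Y]-adapted right inverse keeps a
   Lyapunov matrix, namely [P Y P^*], since [P A Y P^* = (P A Pd) (P Y P^* )]. *)
Lemma compress_lyapunov k n (Y A : 'M[C]_n) (P : 'M[C]_(k, n)) :
  lyapunov_mx Y A -> row_free P ->
  lyapunov_mx (P *m Y *m P^t*) (P *m A *m compress Y P).
Proof.
move=> [Yh Ypos Aneg] Pfree; have Npos := gram_posdef Ypos Pfree.
split=> [|//|u u0].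
  by rewrite !trmxC_mul trmxCK Yh mulmxA.
have -> : P *m A *m compress Y P *m (P *m Y *m P^t*) = P *m (A *m Y) *m P^t*.
  by rewrite /compress -mulmxA mulmxKV ?posdef_unit // !mulmxA.
by rewrite -qf_mulmx Aneg // mulmx_free_eq0.
Qed.

Lemma mx_entry_bound m n (T : 'M[C]_(m, n)) :
  exists2 K : C, 0 <= K & forall i j, `|T i j| <= K.
Proof.
exists (\sum_i \sum_j `|T i j|) => [|i j]; first by do 2!apply: sumr_ge0 => ? _.
rewrite (bigD1 i) //= (bigD1 j) //= -addrA lerDl addr_ge0 ?sumr_ge0 //.
by move=> k _; apply: sumr_ge0.
Qed.

(* A small positive scale [e <= 1] with [c e < f i] for finitely many
   positive [f i]; explicitly [e = (1 + c \sum_j (f j)^-1)^-1]. *)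
Lemma small_scale n (f : 'I_n -> C) (c : C) : (forall i, 0 < f i) -> 0 <= c ->
  exists e : C, [/\ 0 < e, e <= 1 & forall i, c * e < f i].
Proof.
move=> f_gt0 c_ge0; set S := \sum_j (f j)^-1.
have S_ge0 : 0 <= S by apply: sumr_ge0 => j _; rewrite invr_ge0 ltW.
have D_ge1 : 1 <= 1 + c * S by rewrite lerDl mulr_ge0.
have D_gt0 : 0 < 1 + c * S := lt_le_trans ltr01 D_ge1.
exists (1 + c * S)^-1; split; rewrite ?invr_gt0 ?invf_le1 // => i.
have fS_ge1 : 1 <= f i * S.
  rewrite -(divff (lt0r_neq0 (f_gt0 i))) ler_pM2l // /S (bigD1 i) //= lerDl.
  by apply: sumr_ge0 => j _; rewrite invr_ge0 ltW.
rewrite ltr_pdivrMr // mulrDr mulr1 mulrCA.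
by apply: ltr_pwDl => //; apply: ler_peMr.
Qed.

Lemma weighted_sqr_sum_gt0 n (c : 'I_n -> C) (u : 'rV[C]_n) :
  (forall i, 0 < c i) -> u != 0 -> 0 < \sum_i c i * `|u 0 i| ^+ 2.
Proof.
move=> c_gt0 u0.
have terms_ge0 i : true -> 0 <= c i * `|u 0 i| ^+ 2.
  by move=> _; rewrite mulr_ge0 ?exprn_ge0 // ltW.
rewrite lt0r sumr_ge0 // andbT; apply: contra u0; rewrite psumr_eq0 //.
move=> /allP u_eq0; apply/eqP/rowP => i; rewrite mxE.
have /u_eq0 := mem_index_enum i; rewrite implyTb mulf_eq0 (gt_eqF (c_gt0 i)).
by rewrite sqrf_eq0 normr_eq0 => /eqP.
Qed.

(* If all entries of [N] are bounded by [b], then the real part of the form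
   of [N] is at most [n b |u|^2] (by [|u_i| |u_j| <= (|u_i|^2 + |u_j|^2)/2]). *)
Lemma qf_entry_bound n (N : 'M[C]_n) (b : C) (u : 'rV[C]_n) : 0 <= b ->
  (forall i j, `|N i j| <= b) ->
  'Re (qf u N) <= n%:R * b * \sum_i `|u 0 i| ^+ 2.
Proof.
move=> b_ge0 Nb; set a := fun i => `|u 0 i| ^+ 2.
apply: le_trans (leif_Re_Creal _).1 _; rewrite qfE.
apply: le_trans (ler_norm_sum _ _ _) _.
apply: (@le_trans _ _ (\sum_i \sum_j b * ((a i + a j) / 2%:R))).
  apply: ler_sum => i _; apply: le_trans (ler_norm_sum _ _ _) _.
  apply: ler_sum => j _; rewrite !normrM norm_conjC mulrAC [b * _]mulrC.
  apply: ler_pM; rewrite ?mulr_ge0 ?normr_ge0 //.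
  exact: (real_leif_mean_square (normr_real (u 0 i)) (normr_real (u 0 j))).1.
have -> : \sum_i \sum_j b * ((a i + a j) / 2%:R) =
    b / 2%:R * (\sum_(i < n) \sum_(j < n) a i + \sum_(i < n) \sum_(j < n) a j).
  rewrite mulrDr !big_distrr -big_split; apply: eq_bigr => i _ /=.
  by rewrite !big_distrr -big_split; apply: eq_bigr => j _ /=; ring.
rewrite exchange_big /= !sumr_const card_ord -mulr_natr le_eqVlt.
by apply/orP; left; apply/eqP; field.
Qed.

Lemma diag_dominant_dissipative n (d : 'rV[C]_n) (N : 'M[C]_n) (b : C) :
  0 <= b -> (forall i j, `|N i j| <= b) ->
  (forall i, 'Re (d 0 i) + n%:R * b < 0) ->
  forall u : 'rV_n, u != 0 -> 'Re (qf u (diag_mx d + N)) < 0.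
Proof.
move=> b_ge0 Nb d_neg u u0.
rewrite qfD raddfD qf_diag raddf_sum /=.
apply: le_lt_trans (lerD (lexx _) (qf_entry_bound u b_ge0 Nb)) _.
have -> : \sum_i 'Re (d 0 i * `|u 0 i| ^+ 2) + n%:R * b * \sum_i `|u 0 i| ^+ 2 =
    - \sum_i (- ('Re (d 0 i) + n%:R * b)) * `|u 0 i| ^+ 2.
  rewrite big_distrr -sumrN -big_split; apply: eq_bigr => i _ /=.
  by rewrite ReMr ?rpredX ?normr_real //; ring.
by rewrite oppr_lt0; apply: weighted_sqr_sum_gt0 => // i; rewrite oppr_gt0.
Qed.

(* Conjugation of [T] by [diag (e^i)]: entry [(i, j)] is [T i j e^(i-j)]. *)
Definition scale_trig n (e : C) (T : 'M[C]_n) : 'M[C]_n :=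
  \matrix_(i, j) (T i j * e ^+ i / e ^+ j).

(* For lower triangular [T], scaling by a small [e] shrinks the off-diagonal
   part: only entries with [i > j] survive, each multiplied by [e^(i-j) <= e]. *)
Lemma scale_trig_offdiag n (e K : C) (T : 'M[C]_n) :
  is_trig_mx T -> 0 < e -> e <= 1 -> (forall i j, `|T i j| <= K) ->
  forall i j, `|(scale_trig e T - diag_mx (\row_i T i i)) i j| <= K * e.
Proof.
move=> Ttrig e_gt0 e_le1 TK i j; rewrite !mxE.
have e_neq0 : e != 0 := lt0r_neq0 e_gt0.
have K_ge0 : 0 <= K := le_trans (normr_ge0 _) (TK i j).
have Ke_ge0 : 0 <= K * e by rewrite mulr_ge0 // ltW.
case: (ltngtP i j) => [lt_ij|lt_ji|/val_inj eq_ij].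
- have ne_ij : (i == j) = false by rewrite -val_eqE /= ltn_eqF.
  by rewrite (is_trig_mxP Ttrig i j lt_ij) ne_ij !mul0r subr0 normr0.
- have ne_ij : (i == j) = false by rewrite -val_eqE /= gtn_eqF.
  rewrite ne_ij mulr0n subr0 -mulrA -expfB // normrM.
  have e_ge0 := ltW e_gt0.
  rewrite (ger0_norm (exprn_ge0 _ e_ge0)) ler_pM ?exprn_ge0 //.
  have [k ->] : exists k, (i - j)%N = k.+1.
    by exists (i - j).-1; rewrite prednK // subn_gt0.
  by rewrite exprS ler_piMr // exprn_ile1.
- by rewrite eq_ij eqxx mulr1n mulfK ?expf_neq0 // subrr normr0.
Qed.

(* A lower triangular matrix with diagonal in the open left half-plane has a
   Lyapunov matrix, obtained from the identity by a diagonal similarity. *)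
Lemma trig_lyapunov n (T : 'M[C]_n) :
  is_trig_mx T -> (forall i, 'Re (T i i) < 0) -> exists Y, lyapunov_mx Y T.
Proof.
move=> Ttrig T_neg; have [K K_ge0 TK] := mx_entry_bound T.
have [e [e_gt0 e_le1 eK]] := @small_scale n (fun i => - 'Re (T i i)) (n%:R * K)
  (fun i => etrans (oppr_gt0 _) (T_neg i)) (mulr_ge0 (ler0n _ n) K_ge0).
have e_neq0 : e != 0 := lt0r_neq0 e_gt0.
pose V := diag_mx (\row_(i < n) (e ^+ i)^-1).
have Vu : V \in unitmx.
  rewrite unitmxE det_diag unitfE; apply/prodf_neq0 => i _.
  by rewrite mxE invr_eq0 expf_neq0.
have TV : T *m V = V *m scale_trig e T.
  apply/matrixP => i j; rewrite mul_mx_diag mul_diag_mx !mxE.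
  by field; rewrite !expf_neq0.
exists (V *m 1%:M *m V^t*); apply: lyapunov_similar Vu TV _.
split=> [|u u0|u u0].
- by rewrite trmx1 map_mx1.
- rewrite -diag_const_mx qf_diag; under eq_bigr do rewrite mxE.
  exact: weighted_sqr_sum_gt0.
rewrite mulmx1 -(subrK (diag_mx (\row_i T i i)) (scale_trig e T)) addrC.
apply: (@diag_dominant_dissipative _ _ _ (K * e)) u0 => [||i].
- exact: mulr_ge0 K_ge0 (ltW e_gt0).
- exact: scale_trig_offdiag.
by rewrite mxE mulrA addrC -[X in _ + X]opprK subr_lt0 eK.
Qed.

Lemma trig_eigenvalue n (T : 'M[C]_n) i : is_trig_mx T -> eigenvalue T (T i i).
Proof.
move=> Ttrig; rewrite eigenvalue_root_char char_poly_trig //; apply/rootP.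
by rewrite horner_prod (bigD1 i) //= !hornerE subrr mul0r.
Qed.

(* Lyapunov's theorem (existence half): every Hurwitz matrix admits a
   Lyapunov matrix.  By Schur, [A] is unitarily similar to a triangular [T],
   whose diagonal consists of eigenvalues of [A]. *)
Lemma hurwitz_lyapunov n (A : 'M[C]_n) : hurwitz A -> exists Y, lyapunov_mx Y A.
Proof.
case: n A => [|n] A hA.
  by exists 0; split=> [|u|u]; rewrite thinmx0 ?eqxx.
have [U Uunitary Ttrig] := Schur A (ltn0Sn n).
have UtU : U^t* *m U = 1%:M := mulmx1C (unitarymxP Uunitary).
have Tneg i : 'Re (conjmx U A i i) < 0.
  have Uu := unitarymx_unit Uunitary.
  apply/hA/(eigenvalue_conjmx (stablemx_unit _ Uu)); first by rewrite row_free_unit.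
  exact: trig_eigenvalue.
have [Y lyapT] := trig_lyapunov Ttrig Tneg.
exists (U^t* *m Y *m U^t*^t*); apply: lyapunov_similar lyapT.
  by rewrite map_unitmx unitmx_tr unitarymx_unit.
by rewrite conjymx // !mulmxA UtU mul1mx.
Qed.

(* For a real Hurwitz matrix the Lyapunov matrix can be chosen real:
   symmetrize [Y] with its complex conjugate. *)
Lemma real_hurwitz_lyapunov n (A : 'M[C]_n) :
  map_mx conjC A = A -> hurwitz A ->
  exists2 Y, map_mx conjC Y = Y & lyapunov_mx Y A.
Proof.
move=> Areal /hurwitz_lyapunov [Y [Yh Ypos Aneg]].
have Yt : Y^T = map_mx conjC Y by rewrite -[in RHS]Yh map_mxCK.
have cu0 (u : 'rV_n) : u != 0 -> map_mx conjC u != 0 by rewrite map_mx_eq0.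
exists (Y + map_mx conjC Y); first by rewrite map_mxD map_mxCK addrC.
split=> [|u u0|u u0].
- by rewrite linearD map_mxD /= Yt map_mxCK map_trmx map_mxCK Yt.
- rewrite qfD qf_conj conj_Creal ?gtr0_real ?Ypos ?cu0 //.
  by rewrite addr_gt0 ?Ypos ?cu0.
- rewrite mulmxDr -{2}Areal -map_mxM qfD qf_conj raddfD /= Re_conj.
  by rewrite -[0]addr0 ltrD ?Aneg ?cu0.
Qed.

Lemma conj_trmxC m n (M : 'M[C]_(m, n)) : map_mx conjC (M^t*) = (map_mx conjC M)^t*.
Proof. by rewrite map_trmx. Qed.

Lemma conj_compress k n (Y : 'M[C]_n) (P : 'M[C]_(k, n)) :
  map_mx conjC (compress Y P) = compress (map_mx conjC Y) (map_mx conjC P).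
Proof. by rewrite /compress !map_mxM map_invmx !map_mxM !conj_trmxC. Qed.

Lemma real_mx_conj m n (M : 'M[C]_(m, n)) : map_mx conjC M = M -> real_mx M.
Proof.
by move=> Mreal; apply/mxOverP => i j; apply/CrealP; rewrite -[in RHS]Mreal mxE.
Qed.

Lemma conj_rowsub m m' n (f : 'I_m' -> 'I_m) (M : 'M[C]_(m, n)) :
  map_mx conjC (rowsub f M) = rowsub f (map_mx conjC M).
Proof. by apply/matrixP => i j; rewrite !mxE. Qed.

End LyapunovMatrices.

Lemma complementary_projections (F : fieldType) k l n
    (P : 'M[F]_(k, n)) (Pd : 'M[F]_(n, k)) (Pb : 'M[F]_(l, n)) (Pbd : 'M[F]_(n, l)) :
  P *m Pd = 1%:M -> Pb *m Pbd = 1%:M -> P *m Pbd = 0 -> Pb *m Pd = 0 ->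
  (1%:M - Pbd *m Pb <= P)%MS -> Pd *m P + Pbd *m Pb = 1%:M.
Proof.
move=> PPd PbPbd PPbd PbPd /submxP [D DP].
have one : 1%:M = D *m P + Pbd *m Pb by rewrite -DP subrK.
have fixP : P *m (Pd *m P + Pbd *m Pb) = P.
  by rewrite mulmxDr !mulmxA PPd PPbd mul1mx mul0mx addr0.
have fixPb : Pb *m (Pd *m P + Pbd *m Pb) = Pb.
  by rewrite mulmxDr !mulmxA PbPd PbPbd mul1mx mul0mx add0r.
by rewrite -[LHS]mul1mx {1}one mulmxDl -!mulmxA fixP fixPb -one.
Qed.

Section Decomposition.
Variables (C : numClosedFieldType) (n m : nat) (A Y : 'M[C]_n) (L : 'M[C]_(n, m)).
Hypothesis lyapY : lyapunov_mx Y A.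
Hypothesis rankL : \rank L = m.

Let Yh : Y^t* = Y. Proof. by case: lyapY. Qed.
Let Ypos : posdef Y. Proof. by case: lyapY. Qed.
Let Yunit : Y \in unitmx. Proof. exact: posdef_unit. Qed.

(* [Pbar = L^* Y^-1] and its [Y]-adapted right inverse, which is
   [L (Pbar L)^-1]; [1 - Pbar_rinv Pbar] projects onto the vectors killing [L]. *)
Definition Pbar : 'M[C]_(m, n) := L^t* *m invmx Y.
Definition Pbar_rinv : 'M[C]_(n, m) := compress Y Pbar.
Definition complement_proj : 'M[C]_n := 1%:M - Pbar_rinv *m Pbar.

Definition Pker : 'M[C]_(\rank complement_proj, n) :=
  rowsub (maxrankfun complement_proj) complement_proj.
Definition Pker_rinv : 'M[C]_(n, \rank complement_proj) := compress Y Pker.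

Lemma invY_herm : (invmx Y)^t* = invmx Y.
Proof. by rewrite trmx_inv map_invmx Yh. Qed.

Lemma Pbar_free : row_free Pbar.
Proof.
rewrite /row_free mxrankMfree ?row_free_unit ?unitmx_inv //.
by rewrite mxrank_map mxrank_tr rankL.
Qed.

(* [Pbar Y Pbar^* = L^* Y^-1 L = Pbar L]; hence [Pbar L] is invertible
   (part of (C3)) and [Pbar_rinv] simplifies to [L (Pbar L)^-1]. *)
Lemma Pbar_gram : Pbar *m Y *m Pbar^t* = Pbar *m L.
Proof. by rewrite trmxC_mul trmxCK invY_herm mulmxA mulmxK. Qed.

Lemma Pbar_L_unit : Pbar *m L \in unitmx.
Proof. by rewrite -Pbar_gram; apply/posdef_unit/gram_posdef/Pbar_free. Qed.

Lemma Pbar_rinvE : Pbar_rinv = L *m invmx (Pbar *m L).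
Proof.
by rewrite /Pbar_rinv /compress Pbar_gram trmxC_mul trmxCK invY_herm mulKVmx.
Qed.

Lemma Pker_L : Pker *m L = 0.
Proof.
have QL : complement_proj *m L = 0.
  rewrite mulmxBl mul1mx Pbar_rinvE -(mulmxA _ Pbar L) -mulmxA mulVmx ?Pbar_L_unit //.
  by rewrite mulmx1 subrr.
by rewrite /Pker rowsubE -mulmxA QL mulmx0.
Qed.

Lemma Pker_free : row_free Pker.
Proof. exact: maxrowsub_free. Qed.

Lemma Pker_Pbar_decomposition : Pker_rinv *m Pker + Pbar_rinv *m Pbar = 1%:M.
Proof.
apply: complementary_projections.
- exact: compress_rinv Ypos Pker_free.
- exact: compress_rinv Ypos Pbar_free.
- by rewrite Pbar_rinvE mulmxA Pker_L mul0mx.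
- rewrite /Pker_rinv /compress /Pbar !mulmxA -(mulmxA _ (invmx Y)) mulVmx //.
  by rewrite mulmx1 -trmxC_mul Pker_L trmx0 map_mx0 !mul0mx.
- by rewrite /Pker eq_maxrowsub.
Qed.

Section Reality.
Hypothesis Yreal : map_mx conjC Y = Y.
Hypothesis Lreal : map_mx conjC L = L.

Lemma Pbar_real : map_mx conjC Pbar = Pbar.
Proof. by rewrite map_mxM map_invmx conj_trmxC Lreal Yreal. Qed.

Lemma Pbar_rinv_real : map_mx conjC Pbar_rinv = Pbar_rinv.
Proof. by rewrite conj_compress Yreal Pbar_real. Qed.

Lemma Pker_real : map_mx conjC Pker = Pker.
Proof.
have Qreal : map_mx conjC complement_proj = complement_proj.
  by rewrite map_mxB map_mx1 map_mxM Pbar_rinv_real Pbar_real.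
by rewrite /Pker conj_rowsub Qreal.
Qed.

Lemma Pker_rinv_real : map_mx conjC Pker_rinv = Pker_rinv.
Proof. by rewrite conj_compress Yreal Pker_real. Qed.
End Reality.
End Decomposition.

Theorem lemma2 (C : numClosedFieldType) (n m : nat)
    (A : 'M[C]_n) (L : 'M[C]_(n, m)) :
  real_mx A -> real_mx L -> hurwitz A -> \rank L = m ->
  exists (p : nat) (P : 'M[C]_(p, n)) (Pd : 'M[C]_(n, p))
         (Pb : 'M[C]_(m, n)) (Pbd : 'M[C]_(n, m)),
    [/\ real_mx P, real_mx Pd, real_mx Pb & real_mx Pbd] /\
    P *m Pd = 1%:M /\ Pb *m Pbd = 1%:M /\
    (* (C1) *) Pd *m P + Pbd *m Pb = 1%:M /\
    (* (C2) *) hurwitz (P *m A *m Pd) /\ hurwitz (Pb *m A *m Pbd) /\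
    (* (C3) *) P *m L = 0 /\ Pb *m L \in unitmx.
Proof.
move=> /realmxC Areal /realmxC Lreal hA rankL.
have [Y Yreal lyapY] := real_hurwitz_lyapunov Areal hA.
have [_ Ypos _] := lyapY.
have Pker_free := Pker_free Y L; have Pbar_free := Pbar_free lyapY rankL.
exists _, (Pker Y L), (Pker_rinv Y L), (Pbar Y L), (Pbar_rinv Y L).
split; first by split; apply: real_mx_conj;
  [exact: Pker_real | exact: Pker_rinv_real | exact: Pbar_real | exact: Pbar_rinv_real].
split; first exact: compress_rinv.
split; first exact: compress_rinv.
split; first exact: Pker_Pbar_decomposition lyapY rankL.
split; first exact: lyapunov_hurwitz (compress_lyapunov lyapY Pker_free).
split; first exact: lyapunov_hurwitz (compress_lyapunov lyapY Pbar_free).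
by split; [exact: Pker_L lyapY rankL | exact: Pbar_L_unit lyapY rankL].
Qed.
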